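(* Let $k$ be a positive integer and let $\mathcal A$ be an incremental clustering algorithm which, given $k$ and the points of a finite distance space $(\mathcal X,d)$ in some order, maintains (and finally outputs) a list of $\ell$ centers chosen from the points seen so far. Suppose that for every finite distance space $(\mathcal X,d)$, every ordering of $\mathcal X$, and every nice $k$-clustering $\mathcal C$ of $\mathcal X$, the final list of centers induces a refinement of $\mathcal C$. Then $\ell\ge 2^{k-1}$.
   Context: A distance space $(\mathcal X,d)$ is a set with a symmetric function $d:\mathcal X\times\mathcal X\to\mathbb R_{\ge0}$ with $d(x,x)=0$. A clustering of $\mathcal X$ is a set of nonempty, pairwise disjoint subsets whose union is $\mathcal X$; a $k$-clustering has exactly $k$ clusters. Write $x\sim_{\mathcal C}y$ if $x,y$ are in the same cluster and $x\not\sim_{\mathcal C}y$ otherwise. $\mathcal C$ is nice if for all $x,y,z\in\mathcal X$: $d(y,x)<d(z,x)$ whenever $x\sim_{\mathcal C}y$ and $x\not\sim_{\mathcal C}z$. A list $T=(t_1,\ldots,t_m)$ induces the clustering of $\mathcal X$ in which each $x$ is assigned to the index $i$ minimizing $d(x,t_i)$ (ties broken by smallest $i$), empty clusters discarded. A clustering $\mathcal C$ is a refinement of $\mathcal C'$ if $x\sim_{\mathcal C}y$ implies $x\sim_{\mathcal C'}y$ for all $x,y$. *)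

From Stdlib Require Import Reals.
From mathcomp Require Import all_boot.
Set Implicit Arguments. Unset Strict Implicit. Unset Printing Implicit Defensive.

Definition distance_space (X : finType) (d : X -> X -> R) : Prop :=
  (forall x y, Rle R0 (d x y)) /\ (forall x y, d x y = d y x) /\ (forall x, d x x = R0).

Definition is_k_clustering (X : finType) (P : {set {set X}}) (k : nat) : Prop :=
  partition P [set: X] /\ #|P| = k.

Definition same_cluster (X : finType) (P : {set {set X}}) (x y : X) : Prop :=
  exists C, C \in P /\ x \in C /\ y \in C.

Definition nice (X : finType) (d : X -> X -> R) (P : {set {set X}}) : Prop :=
  forall x y z, same_cluster P x y -> ~ same_cluster P x z -> Rlt (d y x) (d z x).

(* [assigned d T x i]: in the clustering induced by the list T = (t_0,...,t_{m-1}),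
   the point x goes to index i: i minimizes d(x,t_i), ties broken by smallest index. *)
Definition assigned (X : finType) (d : X -> X -> R) (T : seq X) (x : X) (i : nat) : Prop :=
  i < size T /\
  (forall j, j < size T -> Rle (d x (nth x T i)) (d x (nth x T j))) /\
  (forall j, j < i -> Rlt (d x (nth x T i)) (d x (nth x T j))).

(* The list T induces a clustering of X (i.e. every point is assigned, which just says
   T is nonempty) and this induced clustering is a refinement of P. *)
Definition induces_refinement (X : finType) (d : X -> X -> R) (T : seq X)
    (P : {set {set X}}) : Prop :=
  (forall x, exists i, assigned d T x i) /\
  (forall x y i, assigned d T x i -> assigned d T y i -> same_cluster P x y).

(* An incremental (center-based) algorithm.  Its state is the current list of centers
   T = (t_0,...,t_{m-1}).  On receiving a new point x it sees only the distances among
   the points of  rcons T x  (indexed by 'I_m.+1, index m being x) and returns the new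
   list of centers as a list of indices into  rcons T x . *)
Definition inc_alg := forall m : nat, ('I_m.+1 -> 'I_m.+1 -> R) -> seq 'I_m.+1.

Definition alg_step (X : finType) (d : X -> X -> R) (A : inc_alg) (T : seq X) (x : X)
    : seq X :=
  let U := rcons T x in
  [seq nth x U (val i) | i <- A (size T) (fun i j : 'I_(size T).+1 => d (nth x U i) (nth x U j))].

Definition alg_run (X : finType) (d : X -> X -> R) (A : inc_alg) (s : seq X) : seq X :=
  foldl (alg_step d A) [::] s.

From Stdlib Require Import Reals.
From mathcomp Require Import all_boot.

Set Implicit Arguments. Unset Strict Implicit. Unset Printing Implicit Defensive.

(* Take the binary words of length n = k - 1 with d(x, y) = n - lcp(x, y), where
   lcp is the length of the longest common prefix.  For every word p, grouping the
   words by the length of their common prefix with p is a nice k-clustering in which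
   p forms a singleton cluster.  A list of centers refining all these clusterings
   must send distinct words to distinct centers, so it has at least 2^n elements. *)

Fixpoint lcp (T : eqType) (s t : seq T) : nat :=
  if s is a :: s' then if t is b :: t' then
    if a == b then (lcp s' t').+1 else 0 else 0 else 0.

Section LongestCommonPrefix.
Variable T : eqType.
Implicit Types s t p : seq T.

Lemma lcpC s t : lcp s t = lcp t s.
Proof. by elim: s t => [|a s IHs] [|b t] //=; rewrite eq_sym IHs. Qed.

Lemma lcpss s : lcp s s = size s.
Proof. by elim: s => [|a s IHs] //=; rewrite eqxx IHs. Qed.

Lemma lcp_leq_size s t : lcp s t <= size s.
Proof. by elim: s t => [|a s IHs] [|b t] //=; case: (a == b); rewrite ?ltnS. Qed.

Lemma lcp_eq_size s t : size s = size t -> lcp s t = size s -> s = t.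
Proof.
elim: s t => [|a s IHs] [|b t] //= [eq_st]; case: eqP => [-> [lcp_st]|//].
by rewrite (IHs t).
Qed.

Lemma lcp_minn s t p : lcp s p != lcp t p -> lcp s t = minn (lcp s p) (lcp t p).
Proof.
elim: p s t => [|c p IHp] [|a s] [|b t] //=; rewrite ?min0n //.
case: (a =P c) => [->|ne_ac]; case: (b =P c) => [->|ne_bc] //=.
- by rewrite eqxx eqSS minnSS => /IHp ->.
- by case: eqP => // eq_cb; case: ne_bc.
- by case: eqP => // eq_ab; case: ne_ac; rewrite eq_ab.
Qed.

End LongestCommonPrefix.

Section BinaryPrefix.
Implicit Types s t p : seq bool.

Lemma lcp_flip p j : j < size p -> lcp (set_nth false p j (~~ nth false p j)) p = j.
Proof.
elim: p j => [|c p IHp] [|j] //=; first by case: c.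
by rewrite eqxx ltnS => /IHp ->.
Qed.

(* Over a binary alphabet, two words leaving [p] at the same position [j] both
   carry the letter [~~ p_j] there, so they agree beyond [j]. *)
Lemma lcp_same_branch s t p : size s = size p -> size t = size p ->
  lcp s p = lcp t p -> lcp s p < size p -> lcp s p < lcp s t.
Proof.
elim: p s t => [|c p IHp] [|a s] [|b t] //= [size_s] [size_t].
case: (a =P c) => [->|ne_ac]; case: (b =P c) => [->|ne_bc] //=.
- by rewrite eqxx => -[lcp_st]; rewrite !ltnS; apply: IHp.
- by move: ne_ac ne_bc; case: a; case: b; case: c.
Qed.

End BinaryPrefix.

Section PrefixSpace.
Variable n : nat.
Local Notation word := (n.-tuple bool).
Implicit Types p x y z : word.

Lemma lcp_leq_n x y : lcp x y <= n.
Proof. by have := lcp_leq_size x y; rewrite size_tuple. Qed.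

Lemma lcp_eq_n x y : lcp x y = n -> x = y.
Proof.
move=> lcp_xy; apply/val_inj/lcp_eq_size; rewrite ?lcp_xy size_tuple //.
by rewrite size_tuple.
Qed.

Lemma exists_lcp p j : j <= n -> exists x, lcp x p = j.
Proof.
rewrite leq_eqVlt => /orP[/eqP -> | lt_jn]; first by exists p; rewrite lcpss size_tuple.
have size_flip : size (set_nth false p j (~~ nth false p j)) == n.
  by rewrite size_set_nth size_tuple; apply/eqP/maxn_idPr.
by exists (Tuple size_flip); rewrite /= lcp_flip ?size_tuple.
Qed.

Definition prefix_dist x y : R := INR (n - lcp x y).

Lemma prefix_distance_space : distance_space prefix_dist.
Proof.
split; [|split] => [x y|x y|x]; rewrite /prefix_dist.
- exact: pos_INR.
- by rewrite lcpC.
- by rewrite lcpss size_tuple subnn.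
Qed.

Definition prefix_cluster p (j : 'I_n.+1) : {set word} := [set x : word | lcp x p == j].

Definition prefix_clustering p : {set {set word}} :=
  [set prefix_cluster p j | j : 'I_n.+1].

Lemma same_prefix_clusterP p x y :
  same_cluster (prefix_clustering p) x y <-> lcp x p = lcp y p.
Proof.
split=> [[_ [/imsetP[j _ ->]]]|eq_xy]; first by rewrite !inE => -[/eqP -> /eqP ->].
have lt_xp : lcp x p < n.+1 by rewrite ltnS lcp_leq_n.
exists (prefix_cluster p (Ordinal lt_xp)); split; first exact: imset_f.
by rewrite !inE -eq_xy eqxx.
Qed.

Lemma prefix_cluster_neq0 p j : prefix_cluster p j != set0.
Proof.
have [x lcp_x] := exists_lcp p (ltn_ord j : j <= n).
by apply/set0Pn; exists x; rewrite inE lcp_x.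
Qed.

Lemma prefix_clustering_k p : is_k_clustering (prefix_clustering p) n.+1.
Proof.
have inj_cluster : injective (prefix_cluster p).
  move=> i j eq_ij; have /set0Pn[x x_i] := prefix_cluster_neq0 p i.
  have := x_i; rewrite {1}eq_ij; move: x_i; rewrite !inE => /eqP lcp_i /eqP lcp_j.
  by apply/val_inj; rewrite /= -lcp_i -lcp_j.
split; last by rewrite card_imset // card_ord.
apply/and3P; split.
- apply/eqP/setP => x; rewrite inE; apply/bigcupP.
  have lt_xp : lcp x p < n.+1 by rewrite ltnS lcp_leq_n.
  by exists (prefix_cluster p (Ordinal lt_xp)); rewrite ?imset_f ?inE.
- apply/trivIsetP => _ _ /imsetP[i _ ->] /imsetP[j _ ->] ne_ij.
  rewrite -setI_eq0; apply/set0Pn => -[x]; rewrite !inE => /andP[/eqP lcp_i /eqP lcp_j].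
  by move: ne_ij; rewrite (_ : i = j) ?eqxx //; apply/val_inj; rewrite /= -lcp_i.
- by apply/imsetP => -[j _ /esym/eqP]; rewrite (negbTE (prefix_cluster_neq0 p j)).
Qed.

Lemma prefix_clustering_nice p : nice prefix_dist (prefix_clustering p).
Proof.
move=> x y z /same_prefix_clusterP eq_xy /same_prefix_clusterP ne_xz.
suff lt_lcp : lcp x z < lcp x y.
  rewrite /prefix_dist !(lcpC _ x); apply/lt_INR/ltP.
  by rewrite ltn_sub2l // (leq_trans lt_lcp) ?lcp_leq_n.
have [lt_n | ge_n] := ltnP (lcp x p) n.
- have lt_xy : lcp x p < lcp x y by apply: lcp_same_branch; rewrite ?size_tuple.
  by rewrite (lcp_minn (p := p)); [rewrite (leq_ltn_trans (geq_minl _ _)) | apply/eqP].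
- have eq_xp : lcp x p = n by apply/eqP; rewrite eqn_leq lcp_leq_n.
  have eq_yp : lcp y p = n by rewrite -eq_xy.
  rewrite (lcp_eq_n eq_xp) (lcp_eq_n eq_yp) lcpss size_tuple lcpC.
  rewrite ltn_neqAle lcp_leq_n andbT.
  by apply/eqP => eq_zp; apply: ne_xz; rewrite eq_xp eq_zp.
Qed.

Lemma same_prefix_cluster_self x y :
  same_cluster (prefix_clustering x) x y -> x = y.
Proof. by move/same_prefix_clusterP; rewrite lcpss size_tuple => /esym/lcp_eq_n. Qed.

End PrefixSpace.

Lemma card_leq_size_refining (X : finType) (d : X -> X -> R) (T : seq X)
    (P : X -> {set {set X}}) :
    (forall x, induces_refinement d T (P x)) ->
    (forall x y, same_cluster (P x) x y -> x = y) ->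
  #|X| <= size T.
Proof.
move=> refines singleton.
have /fin_all_exists[h assigned_h] x : exists i : 'I_(size T), assigned d T x i.
  by have [i assigned_i] := (refines x).1 x; exists (Ordinal assigned_i.1).
rewrite -[size T]card_ord; apply: (leq_card h) => x y eq_h.
apply: singleton; apply: (refines x).2 (assigned_h x) _.
by rewrite eq_h; exact: assigned_h.
Qed.

Lemma size_alg_run_leq (X : finType) (d : X -> X -> R) (A : inc_alg) (l : nat) (s : seq X) :
    (forall m (D : 'I_m.+1 -> 'I_m.+1 -> R), size (A m D) <= l) -> s != [::] ->
  size (alg_run d A s) <= l.
Proof.
move=> size_A; case/lastP: s => // s x _.
by rewrite /alg_run foldl_rcons /alg_step size_map size_A.
Qed.

Theorem mainTheorem9 (k l : nat) (hk : 0 < k) (A : inc_alg)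
  (hsize : forall m (D : 'I_m.+1 -> 'I_m.+1 -> R), size (A m D) <= l)
  (hA : forall (X : finType) (d : X -> X -> R), distance_space d ->
        forall s : seq X, perm_eq s (enum X) ->
        forall P : {set {set X}}, is_k_clustering P k -> nice d P ->
        induces_refinement d (alg_run d A s) P) :
  2 ^ (k - 1) <= l.
Proof.
case: k hk hA => [//|n] _ hA; rewrite subSS subn0.
pose s := enum {: n.-tuple bool}.
have refines p : induces_refinement (@prefix_dist n) (alg_run (@prefix_dist n) A s)
    (prefix_clustering p).
  exact: hA (@prefix_distance_space n) s (perm_refl s) _
    (prefix_clustering_k p) (@prefix_clustering_nice n p).
have := card_leq_size_refining refines (@same_prefix_cluster_self n).
rewrite card_tuple card_bool => /leq_trans; apply; apply: size_alg_run_leq => //.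
by rewrite -size_eq0 -cardE card_tuple card_bool expn_eq0.
Qed.
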